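(* Let $G$ be an odd unicyclic graph on $n$ vertices $1,2,\ldots,n$ with edges $e_1,\ldots,e_n$, cycle $C$ and incidence matrix $M$, and let $S=M^TM$ be its signless edge-Laplacian. Then $S$ is invertible and its inverse $S^{-1}=[s^+_{i,j}]$ is given by $$s^+_{i,j}=\frac{(-1)^{d(e_i,e_j)}}{4}\begin{cases} n & \text{if } i=j,\ e_i\in C,\\ 4|G\setminus e_i(C)| & \text{if } i=j,\ e_i\notin C,\\ -4\big|(G\setminus e_i(C))\cap(G\setminus e_j(C))\big| & \text{if } i\neq j,\ e_i,e_j\notin C,\\ 2|G\setminus\{e_i,e_j\}[P_{e_i-e_j}]|-n & \text{if } i\neq j,\ e_i,e_j\in C,\\ -2|G\setminus e_i(C)|-2|G\setminus e_j(C)| & \text{otherwise.}\end{cases}$$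
   Context: A unicyclic graph on $n$ vertices is a simple connected graph with $n$ edges; it is odd if its unique cycle $C$ has odd length. The incidence matrix $M$ is the $n\times n$ matrix with $(i,j)$-entry $1$ if vertex $i$ is incident with edge $e_j$, else $0$. For a vertex $j$ and edge $e_i=\{l_i,m_i\}$, $d(j,e_i):=\min\{d(j,l_i),d(j,m_i)\}$ ($d$ graph distance), and $d(e_i,e_k):=\min\{d(l_i,e_k),d(m_i,e_k)\}$. For an edge $e$ not on $C$, $G\setminus e[C]$ is the component of $G\setminus e$ containing $C$ and $G\setminus e(C)$ the other component; for $e$ on $C$, $G\setminus e[C]:=G\setminus e$ and $G\setminus e(C)$ is the empty graph. $|X|$ is the number of vertices of $X$, and the intersection in the third case is of vertex sets. For distinct edges $e_i,e_j$ on $C$, $P_{e_i-e_j}$ is the shortest path between endpoints of $e_i$ and of $e_j$, and $G\setminus\{e_i,e_j\}[P_{e_i-e_j}]$ is the component of $G\setminus\{e_i,e_j\}$ containing $P_{e_i-e_j}$. *)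

From HB Require Import structures.
From mathcomp Require Import all_boot all_order all_algebra.
Set Implicit Arguments. Unset Strict Implicit. Unset Printing Implicit Defensive.
Import Order.TTheory GRing.Theory Num.Theory.

(* A graph on vertex set 'I_n with n edges indexed by 'I_n:
   edge e has endpoints l e and m e. *)
Section UnicyclicGraph.
Variables (n : nat) (l m : 'I_n -> 'I_n).

Definition simple_edges : Prop :=
  (forall e, l e != m e) /\
  (forall e f, [set l e; m e] = [set l f; m f] -> e = f).

Definition adjw (F : {set 'I_n}) : rel 'I_n :=
  fun x y => [exists e, (e \notin F) && ([set l e; m e] == [set x; y])].

Definition adj : rel 'I_n := adjw set0.

Definition connected_graph : Prop := forall x y, connect adj x y.

Definition is_cycle_edges (C : {set 'I_n}) : Prop :=
  exists k (vs : 'I_k -> 'I_n),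
    [/\ 3 <= k, injective vs,
        (forall i : 'I_k, exists e, [set l e; m e] = [set vs i; vs (ordS i)]) &
        C = [set e | [exists i : 'I_k, [set l e; m e] == [set vs i; vs (ordS i)]]]].

Fixpoint ball (x : 'I_n) (k : nat) : {set 'I_n} :=
  if k is k'.+1 then ball x k' :|: [set y | [exists z in ball x k', adj z y]]
  else [set x].

(* graph distance: least k with y in ball x k (the graph being connected,
   such a k < n exists) *)
Definition dist (x y : 'I_n) : nat := find (fun k => y \in ball x k) (iota 0 n).

Definition dist_ve (j e : 'I_n) : nat := minn (dist j (l e)) (dist j (m e)).

Definition dist_ee (ei ek : 'I_n) : nat := minn (dist_ve (l ei) ek) (dist_ve (m ei) ek).

(* G \ e (C): vertices of G \ e lying in a component that contains no vertex
   of C; empty if e is on C *)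
Definition side (C : {set 'I_n}) (e : 'I_n) : {set 'I_n} :=
  if e \in C then set0
  else [set v | ~~ [exists f in C, connect (adjw [set e]) v (l f)]].

(* G \ {e_i, e_j} [P_{e_i - e_j}]: the component of G \ {e_i, e_j} containing
   the endpoint of e_i at which the shortest path P to e_j starts *)
Definition compP (ei ej : 'I_n) : {set 'I_n} :=
  let u := if dist_ve (l ei) ej <= dist_ve (m ei) ej then l ei else m ei in
  [set v | connect (adjw [set ei; ej]) u v].

Definition incidence : 'M[rat]_n :=
  \matrix_(i, j) (if (i == l j) || (i == m j) then 1%R else 0%R).

Local Open Scope ring_scope.

Definition inv_formula (C : {set 'I_n}) : 'M[rat]_n :=
  \matrix_(i, j)
    ((-1) ^+ (dist_ee i j) / 4 *
     (if i == j then
        (if i \in C then n%:R else 4 * (#|side C i|)%:R)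
      else if (i \notin C) && (j \notin C) then
        - 4 * (#|side C i :&: side C j|)%:R
      else if (i \in C) && (j \in C) then
        2 * (#|compP i j|)%:R - n%:R
      else - 2 * (#|side C i|)%:R - 2 * (#|side C j|)%:R)).

End UnicyclicGraph.

From mathcomp Require Import all_boot all_algebra zify ring.
Set Implicit Arguments. Unset Strict Implicit. Unset Printing Implicit Defensive.
Import GRing.Theory.

(* Everything rests on parities of distances.  Comparing the n - 1 edges of a
   breadth-first search tree with the n edges of G, and using that the odd
   cycle C admits no proper 2-colouring, one finds that every edge off C is a
   bridge whose endpoints lie at distances of different parity from any fixed
   vertex, and that every edge other than a cycle edge e_i joins vertices whose
   distances to e_i have different parity.  So the matrix U whose column i is
   (-1)^d(v,e_i) / 2 for e_i on C, and (-1)^d(b_i,v) on G \ e_i(C) (b_i the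
   end of e_i there) and 0 elsewhere for e_i off C, satisfies M^T U = 1; hence
   S^-1 = U^T U, whose entries the same parity facts evaluate. *)

Lemma eq_set2 (T : finType) (a b c d : T) : [set a; b] = [set c; d] ->
  (a = c /\ b = d) \/ (a = d /\ b = c).
Proof.
move=> E.
have Ha : a \in [set c; d] by rewrite -E !inE eqxx.
have Hb : b \in [set c; d] by rewrite -E !inE eqxx orbT.
have Hc : c \in [set a; b] by rewrite E !inE eqxx.
have Hd : d \in [set a; b] by rewrite E !inE eqxx orbT.
move: Ha Hb Hc Hd; rewrite !inE.
by do 4 (case/orP=> /eqP ?); subst; auto.
Qed.

Lemma odd_neq_near a b : a <= b.+1 -> b <= a.+1 -> a != b -> odd a != odd b.
Proof.
move=> Hab Hba /negPf Hneq.
have [->|->] : b = a.+1 \/ a = b.+1 by lia.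
  by rewrite /=; case: (odd a).
by rewrite /=; case: (odd b).
Qed.

Lemma val_ordS k (p : 'I_k) : nat_of_ord (ordS p) = if p.+1 < k then p.+1 else 0.
Proof.
rewrite /=; case: ltnP => H; first by rewrite modn_small.
have -> : p.+1 = k by have := ltn_ord p; lia.
exact: modnn.
Qed.

Section SignsAndSums.
Variable R : pzRingType.
Local Open Scope ring_scope.

Lemma mul_signr a b : (-1) ^+ a * (-1) ^+ b = (-1) ^+ (odd a (+) odd b) :> R.
Proof. by rewrite signr_addb !signr_odd. Qed.

Lemma add_signr_opp a b : odd a != odd b -> (-1) ^+ a + (-1) ^+ b = 0 :> R.
Proof.
rewrite -(signr_odd _ a) -(signr_odd _ b).
by case: (odd a); case: (odd b) => //= _; rewrite ?expr0 ?expr1 ?subrr ?addNr.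
Qed.

Lemma sum_pair_indicator n (g : 'I_n -> R) a b : a != b ->
  \sum_v (if (v == a) || (v == b) then 1 else 0) * g v = g a + g b.
Proof.
move=> Hab; rewrite (bigD1 a) //= eqxx mul1r (bigD1 b) /=; last by rewrite eq_sym.
rewrite eqxx orbT mul1r big1 ?addr0 // => v /andP[Hva Hvb].
by rewrite (negbTE Hva) (negbTE Hvb) mul0r.
Qed.

Lemma sum_indicator n (A : {set 'I_n}) (c : R) :
  \sum_v (if v \in A then c else 0) = #|A|%:R * c.
Proof. by rewrite -big_mkcond sumr_const mulr_natl. Qed.

End SignsAndSums.

Section Gram.
Local Open Scope ring_scope.

Lemma invmx_gram (R : comUnitRingType) n (M U : 'M[R]_n) :
  M^T *m U = 1%:M -> M^T *m M \in unitmx /\ invmx (M^T *m M) = U^T *m U.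
Proof.
move=> HMU; have HUM : U *m M^T = 1%:M := mulmx1C HMU.
have Hinv : U^T *m U *m (M^T *m M) = 1%:M.
  by rewrite mulmxA -(mulmxA U^T) HUM mulmx1 -(trmxK (U^T *m M)) trmx_mul trmxK HMU trmx1.
have [_ Hunit] := mulmx1_unit Hinv.
by split=> //; rewrite -[invmx _]mul1mx -Hinv mulmxK.
Qed.

End Gram.

(** * Distances in G \ F *)

Section Distance.
Variables (n : nat) (l m : 'I_n -> 'I_n).

Lemma adjwP (F : {set 'I_n}) x y :
  reflect (exists2 e, e \notin F & [set l e; m e] = [set x; y]) (adjw l m F x y).
Proof.
apply: (iffP existsP) => [[e /andP[He /eqP E]]|[e He E]]; first by exists e.
by exists e; rewrite He E eqxx.
Qed.

Lemma adjw_sym (F : {set 'I_n}) : symmetric (adjw l m F).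
Proof. by move=> x y; apply/adjwP/adjwP => -[e He E]; exists e => //; rewrite E setUC. Qed.

Lemma connectw_sym (F : {set 'I_n}) : connect_sym (adjw l m F).
Proof. exact/sym_connect_sym/adjw_sym. Qed.

Lemma adjw_edge (F : {set 'I_n}) e x y :
  e \notin F -> [set l e; m e] = [set x; y] -> adjw l m F x y.
Proof. by move=> He E; apply/adjwP; exists e. Qed.

Lemma adjw_ends (F : {set 'I_n}) e : e \notin F -> adjw l m F (l e) (m e).
Proof. by move=> He; apply: adjw_edge He _. Qed.

Lemma connectw_sub (F F' : {set 'I_n}) x y :
  F \subset F' -> connect (adjw l m F') x y -> connect (adjw l m F) x y.
Proof.
move=> HF; apply: connect_sub => u v /adjwP[e He E]; apply/connect1/adjwP.
by exists e => //; apply: contra He; apply: subsetP.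
Qed.

Lemma connectw_setU1 (F : {set 'I_n}) e x y : connect (adjw l m F) x y ->
  [\/ connect (adjw l m (e |: F)) x y, connect (adjw l m (e |: F)) (l e) y
    | connect (adjw l m (e |: F)) (m e) y].
Proof.
move=> /connectP[p Hp ->]; elim: p x Hp => [|z p IH] x /=; first by move=> _; apply: Or31.
case/andP=> /adjwP[f Hf E] /IH[] H; [|exact: Or32|exact: Or33].
have [Efe|Hfe] := eqVneq f e; first subst f.
  by case: (eq_set2 E) => -[E1 E2]; [apply: Or33; rewrite E2|apply: Or32; rewrite E1].
apply/Or31/connect_trans/H/connect1/adjwP; exists f => //.
by rewrite !inE negb_or Hfe.
Qed.

Fixpoint ballw (F : {set 'I_n}) (x : 'I_n) (k : nat) : {set 'I_n} :=
  if k is k'.+1 then ballw F x k' :|: [set y | [exists z in ballw F x k', adjw l m F z y]]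
  else [set x].

Definition distw (F : {set 'I_n}) x y := find (fun k => y \in ballw F x k) (iota 0 n).

Lemma ball_ballw x k : ball l m x k = ballw set0 x k.
Proof. by elim: k => //= k ->. Qed.

Lemma dist_distw x y : dist l m x y = distw set0 x y.
Proof. by apply: eq_find => k /=; rewrite ball_ballw. Qed.

Variable F : {set 'I_n}.
Local Notation adjF := (adjw l m F).
Local Notation ballF := (ballw F).
Local Notation distF := (distw F).

Lemma ballw_mono x k k' : k <= k' -> ballF x k \subset ballF x k'.
Proof.
move=> /subnK <-; elim: (k' - k) => // d IH.
by rewrite addSn (subset_trans IH) //= subsetUl.
Qed.

Lemma ballw_adj x k y z : y \in ballF x k -> adjF y z -> z \in ballF x k.+1.
Proof.
by move=> Hy Hyz; rewrite /= !inE; apply/orP; right; apply/existsP; exists y; rewrite Hy.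
Qed.

Lemma ballw_path x p : path adjF x p -> last x p \in ballF x (size p).
Proof.
elim/last_ind: p => [|p z IH]; first by rewrite /= inE.
rewrite rcons_path last_rcons size_rcons => /andP[/IH H1 H2].
exact: ballw_adj H1 H2.
Qed.

Lemma connect_ballw x k y : y \in ballF x k -> connect adjF x y.
Proof.
elim: k y => [|k IH] y /=; first by rewrite inE => /eqP ->.
rewrite !inE => /orP[/IH //|/existsP[z /andP[/IH Hz Hzy]]].
exact: connect_trans Hz (connect1 Hzy).
Qed.

Lemma ballw_adj_src x z k : adjF x z -> ballF z k \subset ballF x k.+1.
Proof.
move=> Hxz; elim: k => [|k IH].
  by apply/subsetP => y; rewrite inE => /eqP ->; apply: ballw_adj Hxz; rewrite inE.
apply/subsetP => y; rewrite inE => /orP[Hy|].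
  by rewrite inE (subsetP IH y Hy).
rewrite inE => /existsP[w /andP[Hw Hwy]].
exact: ballw_adj (subsetP IH w Hw) Hwy.
Qed.

Lemma notin_ballw x y k : k < distF x y -> y \notin ballF x k.
Proof.
move=> Hk; have Hkn : k < n.
  by apply: leq_trans Hk _; rewrite -[X in _ <= X](size_iota 0 n) find_size.
by have := before_find 0 Hk; rewrite nth_iota // add0n => ->.
Qed.

Lemma distw_ball x y : connect adjF x y -> y \in ballF x (distF x y).
Proof.
move=> /connectP[p Hp ->]; have [p' Hp' Hu _] := shortenP Hp.
have Hs : size p' < n.
  have := card_uniqP Hu; rewrite /= => <-.
  by apply: leq_trans (max_card _) _; rewrite card_ord.
have Hhas : has (fun k => last x p' \in ballF x k) (iota 0 n).
  by apply/hasP; exists (size p'); rewrite ?mem_iota //; apply: ballw_path.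
have Hlt : distF x (last x p') < n by rewrite -[X in _ < X](size_iota 0 n) -has_find.
by have := nth_find 0 Hhas; rewrite nth_iota.
Qed.

Lemma ballw_distw x y k : connect adjF x y -> (y \in ballF x k) = (distF x y <= k).
Proof.
move=> Hc; case: leqP => Hk; last exact/negbTE/notin_ballw.
exact: subsetP (ballw_mono _ Hk) _ (distw_ball Hc).
Qed.

Lemma distw_refl x : distF x x = 0.
Proof. by apply/eqP; rewrite -leqn0 -ballw_distw ?connect0 //= inE. Qed.

Lemma distw_eq0 x y : connect adjF x y -> distF x y = 0 -> y = x.
Proof. by move=> /distw_ball + H0; rewrite H0 /= inE => /eqP. Qed.

Lemma distw_adj x y z : connect adjF x y -> adjF y z -> distF x z <= (distF x y).+1.
Proof.
move=> Hc Hyz; rewrite -ballw_distw; first exact: ballw_adj (distw_ball Hc) Hyz.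
exact: connect_trans Hc (connect1 Hyz).
Qed.

Lemma distw_pred x y : connect adjF x y -> y != x ->
  exists2 z, adjF z y & (distF x z).+1 = distF x y.
Proof.
move=> Hc Hne; have := distw_ball Hc.
case Hd: (distF x y) => [|d] /=; first by rewrite inE (negbTE Hne).
rewrite inE => /orP[Hy|].
  by have := @notin_ballw x y d; rewrite Hd ltnSn Hy => /(_ isT).
rewrite inE => /existsP[z /andP[Hz Hzy]]; exists z => //.
have Hcz := connect_ballw Hz.
have := distw_adj Hcz Hzy; move: Hz; rewrite Hd ballw_distw //; lia.
Qed.

Lemma distw_adj_src x y z : connect adjF x y -> adjF x z -> distF x y <= (distF z y).+1.
Proof.
move=> Hc Hxz.
have Hzy : connect adjF z y by apply: connect_trans _ Hc; apply: connect1; rewrite adjw_sym.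
by rewrite -ballw_distw //; apply: subsetP (ballw_adj_src _ Hxz) _ (distw_ball Hzy).
Qed.

Lemma distw_sym_le d x y : distF y x = d -> connect adjF x y -> distF x y <= d.
Proof.
elim: d x y => [|d IH] x y Hd Hc; have Hcy : connect adjF y x by rewrite connectw_sym.
  by rewrite (distw_eq0 Hcy Hd) distw_refl.
have Hne : x != y by apply: contra_eqN Hd => /eqP ->; rewrite distw_refl.
have [z Hzx] := distw_pred Hcy Hne; rewrite Hd => -[Hz].
have Hxz : adjF x z by rewrite adjw_sym.
apply: leq_trans (distw_adj_src Hc Hxz) _.
by rewrite ltnS (IH z y Hz) // (connect_trans (connect1 Hzx) Hc).
Qed.

Lemma distw_sym x y : connect adjF x y -> distF x y = distF y x.
Proof.
move=> Hc; have Hc' : connect adjF y x by rewrite connectw_sym.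
by apply/eqP; rewrite eqn_leq !distw_sym_le.
Qed.

End Distance.

(** * Breadth-first search trees *)

Section BFS.
Variables (n : nat) (l m : 'I_n -> 'I_n) (F : {set 'I_n}) (x : 'I_n).
Hypothesis connect_x : forall y, connect (adjw l m F) x y.
Local Notation d := (distw l m F x).

Definition flat_edges := [set e | (e \notin F) && (d (l e) == d (m e))].

Definition bfs_parent_edge e y := (e \notin F) &&
  (((l e == y) && ((d (m e)).+1 == d y)) || ((m e == y) && ((d (l e)).+1 == d y))).

Definition bfs_parent y := odflt y [pick e | bfs_parent_edge e y].

Lemma bfs_parentP y : y != x -> bfs_parent_edge (bfs_parent y) y.
Proof.
move=> Hne; rewrite /bfs_parent; case: pickP => [e He //|H0].
have [z Hzy Hz] := distw_pred (connect_x y) Hne.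
move/adjwP: Hzy => [e He E]; have := H0 e; rewrite /bfs_parent_edge He /=.
by case: (eq_set2 E) => -[-> ->]; rewrite !eqxx Hz eqxx //= orbT.
Qed.

Lemma bfs_parent_inj : {in [set~ x] &, injective bfs_parent}.
Proof.
move=> y y'; rewrite !inE => Hy Hy' E.
move: (bfs_parentP Hy) (bfs_parentP Hy'); rewrite E /bfs_parent_edge.
set e := bfs_parent y'.
move=> /andP[_ /orP[]/andP[/eqP E1 /eqP E2]] /andP[_ /orP[]/andP[/eqP E3 /eqP E4]];
  rewrite -E1 -E3 //; rewrite E1 in E4; rewrite E3 in E2; lia.
Qed.

Lemma bfs_parent_not_flat y : y != x -> bfs_parent y \in ~: F :\: flat_edges.
Proof.
move=> /bfs_parentP /andP[He H]; rewrite !inE He /= andbT.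
by apply/negP => /eqP E3; case/orP: H => /andP[/eqP E1 /eqP E2]; rewrite E1 in E3; lia.
Qed.

(* A BFS tree has n - 1 edges, none of them flat. *)
Lemma card_flat_edges : #|flat_edges| + n.-1 <= #|~: F|.
Proof.
have Hsub : bfs_parent @: [set~ x] \subset ~: F :\: flat_edges.
  by apply/subsetP => _ /imsetP[y Hy ->]; apply: bfs_parent_not_flat; rewrite in_setC1 in Hy.
have := subset_leq_card Hsub; rewrite (card_in_imset bfs_parent_inj) cardsC1 cardsD card_ord.
have -> : ~: F :&: flat_edges = flat_edges.
  by apply/setIidPr/subsetP => e; rewrite !inE => /andP[].
have : #|flat_edges| <= #|~: F|.
  by apply: subset_leq_card; apply/subsetP => e; rewrite !inE => /andP[].
by move=> Hflat; rewrite -leq_subRL.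
Qed.

End BFS.

(** * Odd unicyclic graphs *)

Section OddUnicyclic.
Variables (n : nat) (l m : 'I_n -> 'I_n) (C : {set 'I_n}) (k : nat) (vs : 'I_k -> 'I_n).
Hypotheses (simple : simple_edges l m) (k_ge3 : 3 <= k) (vs_inj : injective vs)
  (cycle_step : forall i : 'I_k, exists e, [set l e; m e] = [set vs i; vs (ordS i)])
  (C_def : C = [set e | [exists i : 'I_k, [set l e; m e] == [set vs i; vs (ordS i)]]]).

Definition cycle_edge (p : 'I_k) : 'I_n :=
  odflt (vs p) [pick e | [set l e; m e] == [set vs p; vs (ordS p)]].

Lemma cycle_edgeE p : [set l (cycle_edge p); m (cycle_edge p)] = [set vs p; vs (ordS p)].
Proof.
rewrite /cycle_edge; case: pickP => [e /eqP //|H0].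
by have [e E] := cycle_step p; have := H0 e; rewrite E eqxx.
Qed.

Lemma cycle_edge_ends p :
  (l (cycle_edge p) = vs p /\ m (cycle_edge p) = vs (ordS p)) \/
  (l (cycle_edge p) = vs (ordS p) /\ m (cycle_edge p) = vs p).
Proof. exact: eq_set2 (cycle_edgeE p). Qed.

Lemma cycle_edge_in p : cycle_edge p \in C.
Proof. by rewrite C_def inE; apply/existsP; exists p; rewrite cycle_edgeE. Qed.

Lemma in_cycle_edge e : e \in C -> exists p, e = cycle_edge p.
Proof.
rewrite C_def inE => /existsP[p /eqP E]; exists p.
by apply: simple.2; rewrite E cycle_edgeE.
Qed.

Lemma cycle_edge_inj : injective cycle_edge.
Proof.
move=> p q E; have := cycle_edgeE p; rewrite E cycle_edgeE.
case/eq_set2 => [[/vs_inj -> //]|[/vs_inj E1 /vs_inj E2]].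
have := val_ordS p; have := val_ordS q; rewrite -E1 E2.
have := ltn_ord p; have := ltn_ord q.
by move=> ? ?; case: ltnP => ?; case: ltnP => ? ? ?; exfalso; lia.
Qed.

Lemma card_cycle : #|C| = k.
Proof.
have -> : C = cycle_edge @: setT.
  apply/setP => e; apply/idP/imsetP => [/in_cycle_edge[p ->]|[p _ ->]]; last exact: cycle_edge_in.
  by exists p.
by rewrite card_imset ?cardsT ?card_ord //; exact: cycle_edge_inj.
Qed.

Lemma k_gt0 : 0 < k. Proof. exact: leq_trans k_ge3. Qed.

Lemma ordS_last (Hk : k.-1 < k) : ordS (Ordinal Hk) = Ordinal k_gt0.
Proof. by apply: ord_inj; rewrite val_ordS /=; case: ltnP => //; lia. Qed.

Lemma alternating_colour (c : 'I_n -> bool) :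
  (forall p, c (vs p) != c (vs (ordS p))) ->
  forall j (Hj : j < k), c (vs (Ordinal Hj)) = c (vs (Ordinal k_gt0)) (+) odd j.
Proof.
move=> Hc; elim=> [|j IH] Hj; first by rewrite addbF; congr (c (vs _)); apply: val_inj.
have Hj' : j < k by lia.
have E : ordS (Ordinal Hj') = Ordinal Hj by apply: val_inj; rewrite /= modn_small.
have := Hc (Ordinal Hj'); rewrite E IH /=.
by case: (c (vs (Ordinal k_gt0))); case: (c (vs (Ordinal Hj))); case: (odd j).
Qed.

Hypothesis C_odd : odd #|C|.

Lemma odd_cycle_not_bipartite (c : 'I_n -> bool) : ~ (forall e, e \in C -> c (l e) != c (m e)).
Proof.
move=> Hc.
have Hstep p : c (vs p) != c (vs (ordS p)).
  by have := Hc _ (cycle_edge_in p); case: (cycle_edge_ends p) => -[-> ->]; rewrite // eq_sym.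
have Hk1 : k.-1 < k by rewrite ltn_predL k_gt0.
have := Hstep (Ordinal Hk1); rewrite ordS_last (alternating_colour Hstep Hk1) /=.
have -> : odd k.-1 = false by move: C_odd; rewrite card_cycle; case: (k) k_gt0 => //= k' _ /negPf.
by rewrite addbF eqxx.
Qed.

Lemma connect_cycle_arc (F : {set 'I_n}) a b (Ha : a < k) (Hb : b < k) :
  a <= b -> (forall p : 'I_k, a <= p < b -> cycle_edge p \notin F) ->
  connect (adjw l m F) (vs (Ordinal Ha)) (vs (Ordinal Hb)).
Proof.
elim: b Hb => [|b IH] Hb Hab HF.
  by have -> : Ordinal Ha = Ordinal Hb by apply: val_inj => /=; lia.
case: (ltngtP a b.+1) Hab => // [Hlt|Heq] _; last first.
  by have -> : Ordinal Ha = Ordinal Hb by apply: val_inj.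
have Hb' : b < k by lia.
apply: connect_trans (IH Hb' _ _) _; first by lia.
  by move=> p /andP[H1 H2]; apply: HF; rewrite H1 /=; lia.
have E : ordS (Ordinal Hb') = Ordinal Hb by apply: ord_inj; rewrite val_ordS /= Hb.
apply/connect1/(@adjw_edge _ _ _ _ (cycle_edge (Ordinal Hb'))).
  by apply: HF => /=; lia.
by rewrite cycle_edgeE E.
Qed.

Definition cycle_root := vs (Ordinal k_gt0).

Lemma connect_cycle_root (F : {set 'I_n}) (j : 'I_k) :
  (forall p, p != j -> cycle_edge p \notin F) ->
  forall a : 'I_k, connect (adjw l m F) (vs a) cycle_root.
Proof.
move=> HF [a Ha]; case: (leqP a j) => Haj.
  rewrite connectw_sym; apply: connect_cycle_arc => // p /andP[_ Hp]; apply: HF.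
  by apply/eqP => E; rewrite E in Hp; lia.
have Hk1 : k.-1 < k by lia.
apply: (@connect_trans _ _ (vs (Ordinal Hk1))).
  apply: connect_cycle_arc; first by lia.
  by move=> p /andP[Hp _]; apply: HF; apply/eqP => E; rewrite E in Hp; lia.
apply/connect1/(@adjw_edge _ _ _ _ (cycle_edge (Ordinal Hk1))).
  by apply: HF; apply/eqP => E'; move: Haj; rewrite -E' /=; lia.
by rewrite cycle_edgeE ordS_last.
Qed.

Lemma connect_cycle_ends (F : {set 'I_n}) (j : 'I_k) :
  (forall p, p != j -> cycle_edge p \notin F) ->
  forall f, f \in C ->
  connect (adjw l m F) (l f) cycle_root /\ connect (adjw l m F) (m f) cycle_root.
Proof.
move=> HF f /in_cycle_edge[p ->].
by case: (cycle_edge_ends p) => -[-> ->]; split; apply: (connect_cycle_root HF).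
Qed.

Hypothesis connected : connected_graph l m.
Local Notation G := (adjw l m set0).
Local Notation D := (dist l m).
Local Notation dve := (dist_ve l m).

Lemma distG_sym x y : D x y = D y x.
Proof. by rewrite !dist_distw; apply: distw_sym. Qed.

Lemma distG_refl x : D x x = 0.
Proof. by rewrite dist_distw distw_refl. Qed.

Lemma distG_eq0 x y : D x y = 0 -> y = x.
Proof. by rewrite dist_distw; apply: distw_eq0. Qed.

Lemma distG_adj x y z : G y z -> D x z <= (D x y).+1.
Proof. by rewrite !dist_distw; apply: distw_adj. Qed.

Lemma distG_adj_src x y z : G x z -> D x y <= (D z y).+1.
Proof. by rewrite !dist_distw; apply: distw_adj_src. Qed.

Lemma distG_pred x y : y != x -> exists2 z, G z y & (D x z).+1 = D x y.
Proof.
by move=> Hne; have [z Hz] := distw_pred (connected x y) Hne; exists z; rewrite ?dist_distw.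
Qed.

Lemma adjG_ends e : G (l e) (m e).
Proof. by apply: adjw_ends; rewrite inE. Qed.

Lemma cycle_has_flat_edge (F : {set 'I_n}) x :
  (forall y, connect (adjw l m F) x y) -> (forall e, e \in C -> e \notin F) ->
  exists2 e, e \in C & distw l m F x (l e) = distw l m F x (m e).
Proof.
move=> Hx HF.
pose flat_in_C := [exists e in C, distw l m F x (l e) == distw l m F x (m e)].
have [/existsP[e /andP[He /eqP E]]|] := boolP flat_in_C; first by exists e.
rewrite negb_exists => /forallP Hne; exfalso.
apply: (@odd_cycle_not_bipartite (fun v => odd (distw l m F x v))) => e He.
have := Hne e; rewrite He /=; apply: odd_neq_near; apply: distw_adj (Hx _) _.
  by rewrite adjw_sym adjw_ends ?HF.
by rewrite adjw_ends ?HF.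
Qed.

(* A BFS tree uses n - 1 of the n edges and the odd cycle forces a flat edge
   on C, so no edge off C is flat. *)
Lemma odd_dist_notC x e : e \notin C -> odd (D x (l e)) != odd (D x (m e)).
Proof.
move=> He; rewrite !dist_distw.
have Hx : forall y, connect G x y by apply: connected.
have Hflat : #|flat_edges l m set0 x| <= 1.
  have := card_flat_edges Hx; rewrite setC0 cardsT card_ord; have := ltn_ord x; lia.
have [f Hf Ef] := cycle_has_flat_edge Hx (fun e _ => negbT (in_set0 e)).
apply: odd_neq_near.
- by apply: distw_adj (Hx _) _; rewrite adjw_sym adjG_ends.
- exact: distw_adj (Hx _) (adjG_ends e).
apply: contraNneq He => E.
have -> : e = f by apply: (card_le1_eqP Hflat); rewrite !inE /= ?E ?Ef eqxx.
exact: Hf.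
Qed.

Lemma connect_delete_edge e : connect (adjw l m [set e]) (l e) (m e) ->
  forall x y, connect (adjw l m [set e]) x y.
Proof.
move=> Hlm x y; apply: connect_sub _ _ _ (connected x y) => u v /adjwP[f _ E].
have [Efe|Hfe] := eqVneq f e.
  by subst f; case: (eq_set2 E) => -[<- <-] //; rewrite connectw_sym.
by apply/connect1/adjwP; exists f => //; rewrite inE.
Qed.

(* Otherwise G \ e would be a tree, yet it still contains the odd cycle. *)
Lemma bridge_notC e : e \notin C -> ~~ connect (adjw l m [set e]) (l e) (m e).
Proof.
move=> He; apply/negP => /connect_delete_edge /(_ (l e)) Hx.
have := card_flat_edges Hx; rewrite cardsC1 card_ord.
have HF f : f \in C -> f \notin [set e] by move=> Hf; rewrite inE; apply: contraNneq He => <-.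
have [f Hf Ef] := cycle_has_flat_edge Hx HF.
have : 0 < #|flat_edges l m [set e] (l e)|.
  by apply/card_gt0P; exists f; rewrite inE Ef eqxx andbT HF.
lia.
Qed.

Lemma connect_delete_cycle_edge i : i \in C -> forall x y, connect (adjw l m [set i]) x y.
Proof.
move=> Hi; apply: connect_delete_edge.
have [j Ej] := in_cycle_edge Hi.
have HF p : p != j -> cycle_edge p \notin [set i].
  by rewrite inE Ej; apply: contra => /eqP /cycle_edge_inj ->.
have [H1 H2] := connect_cycle_ends HF Hi.
by apply: connect_trans H1 _; rewrite connectw_sym.
Qed.

Definition cycle_parity i v := odd (distw l m [set i] (l i) v).

(* G \ e_i is a tree: all its n - 1 edges are BFS tree edges, none flat. *)
Lemma cycle_parity_flip i f : i \in C -> f != i ->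
  cycle_parity i (l f) != cycle_parity i (m f).
Proof.
move=> Hi Hf; have Hx := connect_delete_cycle_edge Hi (l i).
have Hflat : #|flat_edges l m [set i] (l i)| = 0.
  have := card_flat_edges Hx; rewrite cardsC1 card_ord; have := ltn_ord i; lia.
have Hf' : f \notin [set i] by rewrite inE.
apply: odd_neq_near.
- by apply: distw_adj (Hx _) _; rewrite adjw_sym; apply: adjw_ends.
- exact: distw_adj (Hx _) (adjw_ends _ _ Hf').
apply/negP => /eqP E.
have : f \in flat_edges l m [set i] (l i) by rewrite inE Hf' E eqxx.
by move/card0_eq: Hflat => ->.
Qed.

Lemma cycle_parity_l i : cycle_parity i (l i) = false.
Proof. by rewrite /cycle_parity distw_refl. Qed.

Lemma cycle_parity_m i : i \in C -> cycle_parity i (m i) = false.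
Proof.
move=> Hi; apply/negP => Hm.
apply: (@odd_cycle_not_bipartite (cycle_parity i)) => e He.
have [->|Hne] := eqVneq e i; first by rewrite cycle_parity_l Hm.
exact: cycle_parity_flip.
Qed.

Lemma dist_ve_ends e : dve (l e) e = 0 /\ dve (m e) e = 0.
Proof. by rewrite /dist_ve !distG_refl minn0 min0n. Qed.

Lemma dist_ve_eq0 v e : dve v e = 0 -> v = l e \/ v = m e.
Proof.
rewrite /dist_ve; case: (leqP (D v (l e)) (D v (m e))) => H H0.
  by left; apply/esym/distG_eq0; lia.
by right; apply/esym/distG_eq0; lia.
Qed.

Lemma dist_ve_adj v z e : G v z -> dve v e <= (dve z e).+1.
Proof.
move=> Hvz; rewrite /dist_ve.
have := distG_adj_src (l e) Hvz; have := distG_adj_src (m e) Hvz; lia.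
Qed.

Lemma dist_ve_pred v e : 0 < dve v e ->
  exists z f, [/\ f != e, [set l f; m f] = [set z; v] & (dve z e).+1 = dve v e].
Proof.
move=> Hpos.
have [w Hw Hvw] : exists2 w, (w = l e \/ w = m e) & D v w = dve v e.
  rewrite /dist_ve; case: (leqP (D v (l e)) (D v (m e))) => H.
    by exists (l e); [left|lia].
  by exists (m e); [right|lia].
have Hne : v != w by apply: contraTneq Hpos => Evw; rewrite -Hvw Evw distG_refl.
have [z Hzv Hz] := distG_pred Hne.
move/adjwP: (Hzv) => [f _ Ef]; exists z, f; split => //.
  apply: contraTneq Hpos => Efe; subst f.
  have [El Em] := dist_ve_ends e.
  by case: (eq_set2 Ef) => -[E1 E2]; rewrite ?(esym E1) ?(esym E2) ?El ?Em.
apply/eqP; rewrite eqn_leq; apply/andP; split.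
  by rewrite -Hvw distG_sym -Hz distG_sym /dist_ve; case: Hw => ->; lia.
by apply: dist_ve_adj; rewrite adjw_sym.
Qed.

Lemma odd_dist_ve_cycle i v : i \in C -> odd (dve v i) = cycle_parity i v.
Proof.
move=> Hi; move Hd: (dve v i) => d; elim: d v Hd => [|d IH] v Hd.
  by case: (dist_ve_eq0 Hd) => ->; rewrite ?cycle_parity_l ?cycle_parity_m.
have [|z [f [Hf Ef]]] := @dist_ve_pred v i; first by rewrite Hd.
rewrite Hd => -[/IH Hz]; have := cycle_parity_flip Hi Hf; move: Hz.
by case: (eq_set2 Ef) => -[-> ->] /= <-; case: (odd d); case: (cycle_parity i v).
Qed.

Lemma odd_dist_ve_flip i f : i \in C -> f != i -> odd (dve (l f) i) != odd (dve (m f) i).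
Proof. by move=> Hi Hf; rewrite !odd_dist_ve_cycle //; apply: cycle_parity_flip. Qed.

Section Bridge.
Variables (X : {set 'I_n}) (e0 p q : 'I_n).
Hypotheses (p_in : p \in X) (q_out : q \notin X)
  (e0_ends : (l e0 = p /\ m e0 = q) \/ (l e0 = q /\ m e0 = p))
  (X_closed : forall f, f != e0 -> (l f \in X) = (m f \in X)).

Lemma adj_across u v : G u v -> (u \in X) != (v \in X) ->
  (u = p /\ v = q) \/ (u = q /\ v = p).
Proof.
move=> /adjwP[f _ E] Hst; have [Ef|Hf] := eqVneq f e0.
  by subst f; case: (eq_set2 E) => -[<- <-]; case: e0_ends => -[-> ->]; [left|right|right|left].
by have := X_closed Hf; case: (eq_set2 E) => -[-> ->] H; rewrite H eqxx in Hst.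
Qed.

Lemma adj_pq : G p q.
Proof. by case: e0_ends => -[<- <-]; [|rewrite adjw_sym]; apply: adjG_ends. Qed.

Lemma dist_to_outside x y : x \in X -> y \notin X -> D x q <= D x y.
Proof.
move=> Hx; move: {2}(D x y) (leqnn (D x y)) => d; elim: d y => [|d IH] y Hd Hy.
  have Eyx : y = x by apply: distG_eq0; lia.
  by rewrite Eyx Hx in Hy.
have Hne : y != x by apply: contraNneq Hy => ->.
have [z Hzy Hz] := distG_pred Hne.
have [Hzx|Hzx] := boolP (z \in X); last by have := IH z _ Hzx; lia.
have [] := adj_across Hzy; first by rewrite Hzx Hy.
  by move=> [_ ->].
by move=> [E _]; move: Hzx; rewrite E (negbTE q_out).
Qed.

Lemma dist_across x : x \in X -> D x q = (D x p).+1.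
Proof.
move=> Hx; apply/eqP; rewrite eqn_leq distG_adj ?adj_pq //=.
have Hne : q != x by apply: contraNneq q_out => ->.
have [z Hzq Hz] := distG_pred Hne.
have [Hzx|Hzx] := boolP (z \in X); last by have := dist_to_outside Hx Hzx; lia.
have [] := adj_across Hzq; first by rewrite Hzx (negbTE q_out).
  by move=> [E _]; rewrite -Hz E.
by move=> [E _]; move: Hzx; rewrite E (negbTE q_out).
Qed.

End Bridge.

Section Side.
Variables (e : 'I_n).
Hypothesis e_notC : e \notin C.
Local Notation S := (side l m C e).

Lemma connect_cycle_side f : f \in C ->
  connect (adjw l m [set e]) (l f) cycle_root /\ connect (adjw l m [set e]) (m f) cycle_root.
Proof.
apply: (@connect_cycle_ends _ (Ordinal k_gt0)) => p _.
by rewrite inE; apply: contraNneq e_notC => <-; apply: cycle_edge_in.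
Qed.

Lemma in_side v : (v \in S) = ~~ connect (adjw l m [set e]) v cycle_root.
Proof.
rewrite /side (negbTE e_notC) inE; congr negb; apply/existsP/idP.
  move=> [f /andP[Hf Hvf]]; apply: connect_trans Hvf _.
  by have [] := connect_cycle_side Hf.
move=> Hv; exists (cycle_edge (Ordinal k_gt0)); rewrite cycle_edge_in /=.
apply: connect_trans Hv _; rewrite connectw_sym.
by have [] := connect_cycle_side (cycle_edge_in (Ordinal k_gt0)).
Qed.

Lemma side_connect u v : connect (adjw l m [set e]) u v -> (u \in S) = (v \in S).
Proof.
move=> Huv; rewrite !in_side; congr negb; apply/idP/idP; last exact: connect_trans.
by apply: connect_trans; rewrite connectw_sym.
Qed.

Lemma side_closed f : f != e -> (l f \in S) = (m f \in S).
Proof. by move=> Hf; apply/side_connect/connect1/adjw_ends; rewrite inE. Qed.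

Lemma cycle_notin_side f : f \in C -> (l f \notin S) /\ (m f \notin S).
Proof. by move=> Hf; rewrite !in_side !negbK; apply: connect_cycle_side. Qed.

Lemma side_edge_notC f : (l f \in S) || (m f \in S) -> f \notin C.
Proof. by apply: contraL => /cycle_notin_side[/negbTE-> /negbTE->]. Qed.

Lemma side_sep : (l e \in S) != (m e \in S).
Proof.
have [H1|H1] := boolP (l e \in S); have [H2|H2] := boolP (m e \in S) => //=.
  have := connectw_setU1 e (connected (l e) cycle_root); rewrite setU0 => -[] H.
  - by move: H1; rewrite in_side H.
  - by move: H1; rewrite in_side H.
  - by move: H2; rewrite in_side H.
move: H1 H2; rewrite !in_side !negbK => H1 H2.
by have := bridge_notC e_notC; rewrite (connect_trans H1) // connectw_sym.
Qed.

Definition inner_end := if l e \in S then l e else m e.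
Definition outer_end := if l e \in S then m e else l e.

Lemma inner_end_in : inner_end \in S.
Proof.
rewrite /inner_end; case: ifPn => // /negPf H.
by have := side_sep; rewrite H; case: (m e \in S).
Qed.

Lemma outer_end_notin : outer_end \notin S.
Proof.
rewrite /outer_end; case: ifPn => // H.
by have := side_sep; rewrite H; case: (m e \in S).
Qed.

Lemma inner_outer_ends :
  (l e = inner_end /\ m e = outer_end) \/ (l e = outer_end /\ m e = inner_end).
Proof. by rewrite /inner_end /outer_end; case: ifP => _; [left|right]. Qed.

Lemma connect_inner_end v : v \in S -> connect (adjw l m [set e]) inner_end v.
Proof.
move=> Hv; have := connectw_setU1 e (connected cycle_root v); rewrite setU0 => -[] H.
- by move: Hv; rewrite in_side connectw_sym H.
- by rewrite /inner_end (side_connect H) Hv.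
- have Hm : m e \in S by rewrite (side_connect H).
  have Hl : l e \notin S by have := side_sep; rewrite Hm; case: (l e \in S).
  by rewrite /inner_end (negbTE Hl).
Qed.

Lemma dist_outer_end x : x \in S -> D x outer_end = (D x inner_end).+1.
Proof. exact: (dist_across inner_end_in outer_end_notin inner_outer_ends side_closed). Qed.

Lemma dist_inner_end x : x \notin S -> D x inner_end = (D x outer_end).+1.
Proof.
move=> Hx; apply: (@dist_across (~: S) e); rewrite ?inE ?inner_end_in ?outer_end_notin //.
  by case: inner_outer_ends => -[-> ->]; [right|left].
by move=> f Hf; rewrite !inE side_closed.
Qed.

End Side.

Local Notation S := (side l m C).
Local Notation dee := (dist_ee l m).

Lemma side_const e (Q : 'I_n -> bool) : e \notin C ->
  (forall f, f != e -> l f \in S e -> Q (l f) = Q (m f)) ->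
  {in S e, forall v, Q v = Q (inner_end e)}.
Proof.
move=> He HQ v Hv.
pose A := [pred u | (u \in S e) && (Q u == Q (inner_end e))].
have A_closed : closed (adjw l m [set e]) A.
  apply: (intro_closed (connectw_sym l m [set e])) => u w Huw /andP[Hu /eqP Qu].
  have Hw : w \in S e by rewrite -(side_connect He (connect1 Huw)).
  rewrite inE Hw -Qu /=; move/adjwP: Huw => [f Hf E].
  have Hfe : f != e by apply: contra Hf => /eqP ->; rewrite inE.
  have Hlf : l f \in S e by case: (eq_set2 E) => -[-> _].
  by case: (eq_set2 E) => -[<- <-]; rewrite HQ.
have := closed_connect A_closed (connect_inner_end He Hv).
by rewrite !inE inner_end_in // eqxx Hv /= => /esym/eqP.
Qed.

Lemma dist_eeE i j a b a' b' :
  (l i = a /\ m i = b \/ l i = b /\ m i = a) ->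
  (l j = a' /\ m j = b' \/ l j = b' /\ m j = a') ->
  dee i j = minn (minn (D a a') (D a b')) (minn (D b a') (D b b')).
Proof. by rewrite /dist_ee /dist_ve => -[] [-> ->] [] [-> ->]; lia. Qed.

Lemma dist_ee_sym i j : dee i j = dee j i.
Proof.
rewrite (@dist_eeE i j (l i) (m i) (l j) (m j)) ?(@dist_eeE j i (l j) (m j) (l i) (m i));
  try by left.
by rewrite !(distG_sym (l i)) !(distG_sym (m i)); lia.
Qed.

Lemma dist_ve_outside x e : e \notin C -> x \notin S e -> dve x e = D x (outer_end e).
Proof.
move=> He Hx; have := dist_inner_end He Hx; rewrite /dist_ve.
by case: (inner_outer_ends e) => -[-> ->]; lia.
Qed.

Lemma inner_end_side i j : i != j -> j \notin C -> (inner_end i \in S j) = (l i \in S j).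
Proof. by move=> Hij Hj; rewrite /inner_end; case: ifP => // _; rewrite (side_closed Hj Hij). Qed.

Lemma outer_end_side i j : i != j -> j \notin C -> (outer_end i \in S j) = (l i \in S j).
Proof. by move=> Hij Hj; rewrite /outer_end; case: ifP => // _; rewrite (side_closed Hj Hij). Qed.

Section TwoSides.
Variables (i j : 'I_n).
Hypotheses (i_neq_j : i != j) (i_notC : i \notin C) (j_notC : j \notin C).
Let j_neq_i : j != i. Proof. by rewrite eq_sym. Qed.

Lemma side_nested : l i \in S j -> l j \notin S i.
Proof.
move=> Hij; have := outer_end_notin i_notC; rewrite in_side // negbK => /(connectw_setU1 j)[] H.
- have : outer_end i \notin S j.
    by rewrite in_side // negbK; apply: connectw_sub H; rewrite sub1set !inE eqxx.
  by rewrite outer_end_side // Hij.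
- by rewrite in_side // negbK; apply: connectw_sub H; rewrite sub1set !inE eqxx orbT.
- rewrite (side_closed i_notC j_neq_i) in_side // negbK.
  by apply: connectw_sub H; rewrite sub1set !inE eqxx orbT.
Qed.

Lemma sides_disjoint v : l i \notin S j -> l j \notin S i -> v \in S i -> v \notin S j.
Proof.
move=> Hij Hji Hvi; apply/negP => Hvj.
have : inner_end j \notin S i by rewrite inner_end_side.
rewrite in_side // negbK => Hbj.
have [] := connectw_setU1 i (connect_inner_end j_notC Hvj) => H.
- move: Hvi; rewrite in_side // => /negP; apply; apply: connect_trans _ Hbj.
  by rewrite connectw_sym; apply: connectw_sub H; rewrite sub1set !inE eqxx.
- move: Hij; rewrite (side_connect j_notC (connectw_sub _ H)) ?Hvj //.
  by rewrite sub1set !inE eqxx orbT.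
- move: Hij; rewrite (side_closed j_notC i_neq_j) (side_connect j_notC (connectw_sub _ H)) ?Hvj //.
  by rewrite sub1set !inE eqxx orbT.
Qed.

(* e_i hangs inside the side of e_j, so the closest pair of endpoints is the
   outer end of e_i and the inner end of e_j, and the inner end of e_i is one
   step further from the latter. *)
Lemma odd_dist_nested : l i \in S j ->
  odd (D (inner_end i) (inner_end j)) = ~~ odd (dee i j).
Proof.
move=> Hij; have Hji := side_nested Hij.
have Ea : outer_end i \in S j by rewrite outer_end_side.
have Eb : inner_end i \in S j by rewrite inner_end_side.
have Ea' : outer_end j \notin S i by rewrite outer_end_side.
have Eb' : inner_end j \notin S i by rewrite inner_end_side.
have E1 := dist_outer_end j_notC Ea; have E2 := dist_outer_end j_notC Eb.
have E3 := dist_inner_end i_notC Eb'; have E4 := dist_inner_end i_notC Ea'.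
rewrite distG_sym (distG_sym (inner_end j) (outer_end i)) in E3.
rewrite (distG_sym (outer_end j)) (distG_sym (outer_end j) (outer_end i)) in E4.
rewrite (dist_eeE (inner_outer_ends i) (inner_outer_ends j)).
have -> : minn (minn (D (inner_end i) (inner_end j)) (D (inner_end i) (outer_end j)))
    (minn (D (outer_end i) (inner_end j)) (D (outer_end i) (outer_end j)))
    = D (outer_end i) (inner_end j) by lia.
by rewrite E3 /=; case: (odd _).
Qed.

End TwoSides.

Lemma parity_side_side i j v : i != j -> i \notin C -> j \notin C ->
  v \in S i -> v \in S j ->
  odd (D (inner_end i) v) (+) odd (D (inner_end j) v) = ~~ odd (dee i j).
Proof.
move=> Hij Hi Hj Hvi Hvj.
pose Q v := odd (D (inner_end i) v) (+) odd (D (inner_end j) v).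
have HQ f : f != j -> l f \in S j -> Q (l f) = Q (m f).
  move=> Hf Hlf; have HfC : f \notin C by apply: (side_edge_notC Hj); rewrite Hlf.
  have := odd_dist_notC (inner_end i) HfC; have := odd_dist_notC (inner_end j) HfC.
  by rewrite /Q; do 4 case: (odd _).
rewrite -/(Q v) (side_const Hj HQ Hvj) /Q distG_refl addbF.
have [Hij'|Hij'] := boolP (l i \in S j); first exact: odd_dist_nested.
have [Hji'|Hji'] := boolP (l j \in S i).
  by rewrite distG_sym dist_ee_sym odd_dist_nested // eq_sym.
by have := sides_disjoint Hij Hi Hj Hij' Hji' Hvi; rewrite Hvj.
Qed.

Lemma parity_cycle_side i j v : i \in C -> j \notin C -> v \in S j ->
  odd (dve v i) (+) odd (D (inner_end j) v) = ~~ odd (dee i j).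
Proof.
move=> Hi Hj Hv.
pose Q v := odd (dve v i) (+) odd (D (inner_end j) v).
have HQ f : f != j -> l f \in S j -> Q (l f) = Q (m f).
  move=> Hf Hlf; have HfC : f \notin C by apply: (side_edge_notC Hj); rewrite Hlf.
  have Hfi : f != i by apply: contraNneq HfC => ->.
  have := odd_dist_notC (inner_end j) HfC; have := odd_dist_ve_flip Hi Hfi.
  by rewrite /Q; do 4 case: (odd _).
rewrite -/(Q v) (side_const Hj HQ Hv) /Q distG_refl addbF.
have [Hli Hmi] := cycle_notin_side Hj Hi.
have -> : dee i j = dve (outer_end j) i.
  by rewrite /dist_ee !(dist_ve_outside Hj) // /dist_ve !(distG_sym (outer_end j)).
have Hji : j != i by apply: contraNneq Hj => ->.
have := odd_dist_ve_flip Hi Hji.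
by case: (inner_outer_ends j) => -[-> ->]; do 2 case: (odd _).
Qed.

Section TwoCycleEdges.
Variables (i j : 'I_n).
Hypotheses (i_C : i \in C) (j_C : j \in C) (i_neq_j : i != j).
Let j_neq_i : j != i. Proof. by rewrite eq_sym. Qed.
Local Notation F := [set i; j].

(* the end of e_i at which P_{e_i - e_j} starts, as in [compP] *)
Let near := if dve (l i) j <= dve (m i) j then l i else m i.
Let far := if dve (l i) j <= dve (m i) j then m i else l i.

Lemma near_far_ends : (l i = near /\ m i = far) \/ (l i = far /\ m i = near).
Proof. by rewrite /near /far; case: ifP => _; [left|right]. Qed.

Lemma near_lt_far : dve near j < dve far j.
Proof.
have Hflip := odd_dist_ve_flip j_C i_neq_j.
rewrite /near /far; case: (leqP (dve (l i) j) (dve (m i) j)) => // H.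
by rewrite ltn_neqAle H andbT; apply: contra Hflip => /eqP ->.
Qed.

Lemma connect_toward_j z : dve z j < dve far j ->
  exists2 y, y = l j \/ y = m j & connect (adjw l m F) z y.
Proof.
move Hd: (dve z j) => d; elim: d z Hd => [|d IH] z Hd Hz.
  by exists z; [apply: dist_ve_eq0|apply: connect0].
have [|z' [f [Hf Ef Hz']]] := @dist_ve_pred z j; first by rewrite Hd.
have Hfi : f != i.
  apply/negP => /eqP Efi; subst f.
  have Enf : [set near; far] = [set z'; z].
    by rewrite -Ef; case: near_far_ends => -[<- <-] //; rewrite setUC.
  have := near_lt_far; move: Hz Hz' Hd.
  by case: (eq_set2 Enf) => -[-> ->]; lia.
have Hz'd : dve z' j = d by lia.
have [|y Hy Hz'y] := IH z' Hz'd; first by lia.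
exists y => //; apply: connect_trans Hz'y; apply/connect1/adjwP; exists f.
  by rewrite !inE negb_or Hfi Hf.
by rewrite Ef setUC.
Qed.

Lemma connect_from_ends v : exists2 z, [\/ z = l i, z = m i, z = l j | z = m j] &
  connect (adjw l m F) z v.
Proof.
have [z0 Hz0 Hz0v] : exists2 z0, z0 = l i \/ z0 = m i & connect (adjw l m [set i]) z0 v.
  have := connectw_setU1 i (connected (l i) v); rewrite setU0 => -[] H.
  - by exists (l i); [left|].
  - by exists (l i); [left|].
  - by exists (m i); [right|].
have E : j |: [set i] = F by rewrite setUC.
have := connectw_setU1 j Hz0v; rewrite E => -[] H.
- by exists z0 => //; case: Hz0 => ->; [apply: Or41|apply: Or42].
- by exists (l j) => //; apply: Or43.
- by exists (m j) => //; apply: Or44.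
Qed.

Let Q v := odd (dve v i) (+) odd (dve v j).

Lemma Q_connect a b : connect (adjw l m F) a b -> Q a = Q b.
Proof.
apply: (closed_connect (a := Q)) => x y /adjwP[f]; rewrite !inE negb_or => /andP[Hfi Hfj] E.
have := odd_dist_ve_flip i_C Hfi; have := odd_dist_ve_flip j_C Hfj; rewrite !unfold_in /Q.
by case: (eq_set2 E) => -[-> ->]; do 4 case: (odd _).
Qed.

Lemma Q_near : Q near = odd (dist_ee l m i j).
Proof.
have [Eli Emi] := dist_ve_ends i; have := near_lt_far.
rewrite /Q /dist_ee; case: near_far_ends => -[<- <-]; rewrite ?Eli ?Emi /= => H.
all: by congr odd; lia.
Qed.

Lemma Q_far : Q far = ~~ odd (dist_ee l m i j).
Proof.
have [Eli Emi] := dist_ve_ends i; rewrite -Q_near /Q.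
have := odd_dist_ve_flip j_C i_neq_j.
by case: near_far_ends => -[<- <-]; rewrite Eli Emi /=; do 2 case: (odd _).
Qed.

Lemma Q_j_ends : Q (l j) != Q (m j).
Proof.
have [Elj Emj] := dist_ve_ends j; rewrite /Q Elj Emj !addbF.
exact: odd_dist_ve_flip i_C j_neq_i.
Qed.

Let P := [set v | connect (adjw l m F) near v].

Lemma Q_j_end_outside z : z = l j \/ z = m j -> z \notin P -> Q z = ~~ odd (dist_ee l m i j).
Proof.
move=> Hz HzP; have [y Hy Hnear_y] := connect_toward_j near_lt_far.
have HyP : y \in P by rewrite inE.
have Qy : Q y = odd (dist_ee l m i j) by rewrite -Q_near (Q_connect Hnear_y).
have Hzy : z != y by apply: contraNneq HzP => ->.
have : Q z != Q y.
  move: Hzy; case: Hz => ->; case: Hy => ->; rewrite ?eqxx // => _.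
    exact: Q_j_ends.
  by rewrite eq_sym Q_j_ends.
by rewrite Qy; case: (Q z); case: (odd _).
Qed.

(* Q is constant on the components of G \ {e_i, e_j}; off P, every vertex is
   joined there to the far end of e_i or to an end of e_j outside P, where Q
   takes the opposite value. *)
Lemma parity_cycle_cycle v :
  odd (dve v i) (+) odd (dve v j) = odd (dist_ee l m i j) (+) (v \notin compP l m i j).
Proof.
rewrite -/(Q v) [compP _ _ _ _]/compP -/near -/P.
have [HvP|HvP] := boolP (v \in P).
  by rewrite addbF -Q_near; apply/esym/Q_connect; rewrite inE in HvP.
have [z Hz Hzv] := connect_from_ends v.
have HzP : z \notin P by apply: contra HvP; rewrite !inE => /connect_trans; apply.
have HnearP : near \in P by rewrite inE connect0.
rewrite addbT -(Q_connect Hzv).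
case: Hz => Ez; last 2 first.
- by apply: Q_j_end_outside => //; left.
- by apply: Q_j_end_outside => //; right.
all: case: near_far_ends => -[E1 E2]; rewrite Ez ?E1 ?E2 ?Q_far // in HzP *.
all: by rewrite HnearP in HzP.
Qed.

End TwoCycleEdges.

(** * The inverse of the signless edge-Laplacian *)

Local Open Scope ring_scope.

Definition dual_entry i v : rat :=
  if i \in C then 2^-1 * (-1) ^+ (dve v i)
  else if v \in S i then (-1) ^+ (D (inner_end i) v) else 0.

Definition incidence_dual : 'M[rat]_n := \matrix_(v, i) dual_entry i v.

Lemma side_C i : i \in C -> S i = set0.
Proof. by move=> Hi; rewrite /side Hi. Qed.

Lemma dual_entry_ends j i : dual_entry i (l j) + dual_entry i (m j) = (j == i)%:R.
Proof.
rewrite /dual_entry; have [Hi|Hi] := boolP (i \in C).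
  have [->|Hji] := eqVneq j i.
    by have [-> ->] := dist_ve_ends i; rewrite expr0 mulr1 /=; field.
  by rewrite -mulrDr add_signr_opp ?mulr0 //; apply: odd_dist_ve_flip.
have [->|Hji] := eqVneq j i.
  have Hb := inner_end_in Hi; have Ha := outer_end_notin Hi.
  by case: (inner_outer_ends i) => -[-> ->]; rewrite ?Hb ?(negbTE Ha) distG_refl ?addr0 ?add0r.
rewrite -(side_closed Hi Hji); have [Hl|Hl] := boolP (l j \in S i); last by rewrite addr0.
by apply/add_signr_opp/odd_dist_notC/(side_edge_notC Hi); rewrite Hl.
Qed.

Lemma incidence_dual_right : (incidence l m)^T *m incidence_dual = 1%:M.
Proof.
apply/matrixP => j i; rewrite !mxE.
under eq_bigr do rewrite !mxE.
by rewrite sum_pair_indicator ?dual_entry_ends //; apply: simple.1.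
Qed.

Local Notation sgn i j := ((-1) ^+ dee i j : rat).

Lemma dual_dot_cycle i : i \in C ->
  \sum_v dual_entry i v * dual_entry i v = n%:R / 4.
Proof.
move=> Hi; under eq_bigr do rewrite /dual_entry Hi mulrACA mul_signr addbb expr0 mulr1.
by rewrite sumr_const card_ord -[_ *+ n]mulr_natl; move: (n%:R : rat) => x; field.
Qed.

Lemma dual_dot_side i : i \notin C ->
  \sum_v dual_entry i v * dual_entry i v = #|S i|%:R.
Proof.
move=> Hi; rewrite -[RHS]mulr1 -sum_indicator; apply: eq_bigr => v _.
by rewrite /dual_entry (negbTE Hi); case: ifP; rewrite ?mulr0 // mul_signr addbb.
Qed.

Lemma dual_dot_cycle_cycle i j : i \in C -> j \in C -> i != j ->
  \sum_v dual_entry i v * dual_entry j v =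
  sgn i j / 4 * (2 * #|compP l m i j|%:R - n%:R).
Proof.
move=> Hi Hj Hij.
rewrite (eq_bigr (fun v => - (4^-1 * sgn i j) +
    (if v \in compP l m i j then 2 * (4^-1 * sgn i j) else 0))) => [|v _].
  rewrite big_split /= sum_indicator sumr_const card_ord -[_ *+ n]mulr_natl.
  by move: (#|_|%:R : rat) (n%:R : rat) (sgn i j) => x y z; field.
rewrite /dual_entry Hi Hj mulrACA mul_signr parity_cycle_cycle // signr_addb signr_odd.
by case: (v \in compP l m i j); rewrite /= ?expr0 ?expr1; move: (sgn i j) => z; field.
Qed.

Lemma dual_dot_cycle_side i j : i \in C -> j \notin C ->
  \sum_v dual_entry i v * dual_entry j v = sgn i j / 4 * (- 2 * #|S j|%:R).
Proof.
move=> Hi Hj; rewrite (eq_bigr (fun v => if v \in S j then - (2^-1 * sgn i j) else 0)).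
  by rewrite sum_indicator; move: (#|_|%:R : rat) (sgn i j) => x z; field.
move=> v _; rewrite /dual_entry Hi (negbTE Hj); case: ifP => Hv; last by rewrite mulr0.
by rewrite -mulrA mul_signr (parity_cycle_side Hi Hj Hv) signrN signr_odd mulrN.
Qed.

Lemma dual_dot_side_side i j : i \notin C -> j \notin C -> i != j ->
  \sum_v dual_entry i v * dual_entry j v = - sgn i j * #|S i :&: S j|%:R.
Proof.
move=> Hi Hj Hij; rewrite mulrC -sum_indicator; apply: eq_bigr => v _.
rewrite /dual_entry (negbTE Hi) (negbTE Hj) inE.
have [Hvi|Hvi] := boolP (v \in S i); last by rewrite mul0r.
have [Hvj|Hvj] := boolP (v \in S j); last by rewrite mulr0.
by rewrite mul_signr (parity_side_side Hij Hi Hj Hvi Hvj) signrN signr_odd.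
Qed.

Lemma gram_incidence_dual : incidence_dual^T *m incidence_dual = inv_formula l m C.
Proof.
apply/matrixP => i j; rewrite /inv_formula !mxE.
under eq_bigr do rewrite !mxE.
have [<-|Hij] := eqVneq i j.
  rewrite /dist_ee (proj1 (dist_ve_ends i)) (proj2 (dist_ve_ends i)) expr0 /=.
  have [Hi|Hi] := boolP (i \in C); first by rewrite dual_dot_cycle // div1r mulrC.
  by rewrite dual_dot_side //; move: (#|_|%:R : rat) => x; field.
have [Hi|Hi] := boolP (i \in C); have [Hj|Hj] := boolP (j \in C) => /=.
- by rewrite dual_dot_cycle_cycle.
- by rewrite dual_dot_cycle_side // (side_C Hi) cards0 mulr0 sub0r mulNr.
- rewrite (eq_bigr (fun v => dual_entry j v * dual_entry i v)) => [|v _]; last exact: mulrC.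
  rewrite dual_dot_cycle_side // dist_ee_sym (side_C Hj) cards0 mulr0 subr0.
  by move: (#|_|%:R : rat) (sgn j i) => x z; field.
- by rewrite dual_dot_side_side //; move: (#|_|%:R : rat) (sgn i j) => x z; field.
Qed.

End OddUnicyclic.

Unset Implicit Arguments.
Local Open Scope ring_scope.

Theorem mainTheorem6 (n : nat) (l m : 'I_n -> 'I_n) (C : {set 'I_n}) :
  simple_edges l m ->
  connected_graph l m ->
  is_cycle_edges l m C ->
  odd #|C| ->
  let S := (incidence l m)^T *m incidence l m in
  S \in unitmx /\ invmx S = inv_formula l m C.
Proof.
move=> simple connected [k [vs [k_ge3 vs_inj cycle_step C_def]]] C_odd S.
rewrite -(gram_incidence_dual simple k_ge3 vs_inj cycle_step C_def C_odd connected).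
exact/invmx_gram/(incidence_dual_right simple k_ge3 vs_inj cycle_step C_def C_odd connected).
Qed.
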